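(* Let $S$ be a graded reduced affine monoid, $\tilde S$, $\kappa,\delta$, and the orders $\prec$ on $M$ and $\tilde M$ as in the context. Suppose $\{(x^{\lambda},x^{\mu})\mid(\lambda,\mu)\in\Lambda\}$ is a Gröbner system of $\sim_S$ with respect to $\prec$. Then $\Gamma_1\cup\Gamma_2\cup\Gamma_3$ is a Gröbner system of $\sim_{\tilde S}$ with respect to $\prec$ on $\tilde M$, where $\Gamma_1=\{(x^{\lambda},x^{\mu})\mid\lambda,\mu\in\mathbb{N}_0^{\mathcal{A}(\tilde S)},\ (\kappa(\lambda),\kappa(\mu))\in\Lambda,\ \delta(\lambda)=\delta(\mu)\}$, $\Gamma_2=\{(x_{a[i]}x_{b[j]},x_{a[i-1]}x_{b[j+1]})\mid a,b\in\mathcal{A}(S),\ x_a\prec x_b,\ 0<i\le|a|,\ 0\le j<|b|\}$, $\Gamma_3=\{(x_{a[i]}x_{a[j]},x_{a[i-1]}x_{a[j+1]})\mid a\in\mathcal{A}(S),\ 0<i\le j<|a|\}$.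
   Context: A monoid is a commutative cancellative semigroup with identity; affine: finitely generated submonoid of a finitely generated free abelian group; reduced: only unit is the identity. $S$ is graded: $S=\bigsqcup_{d\in\mathbb{N}_0}S_d$, $S_dS_e\subseteq S_{d+e}$, $|s|=d$ for $s\in S_d$. $\mathcal{A}(S)$ is its set of atoms. $M$ is the free commutative monoid on $x_a$ ($a\in\mathcal{A}(S)$), elements $x^{\alpha}$, and $\sim_S$ the congruence $x^{\alpha}\sim_S x^{\gamma}$ iff $\prod a^{\alpha(a)}=\prod a^{\gamma(a)}$ in $S$. $\tilde S=\{s[i]\mid s\in S,0\le i\le|s|\}$ with $s[i]t[j]=(st)[i+j]$; its atoms are $a[i]$, $a\in\mathcal{A}(S)$, $0\le i\le|a|$; $\tilde M$ is the free commutative monoid on $x_{a[i]}$ and $\sim_{\tilde S}$ its defining congruence (defined analogously). $\kappa(\lambda)(a)=\sum_{i=0}^{|a|}\lambda(a[i])$, $\delta(\lambda)=\sum i\,\lambda(a[i])$. An admissible total order on a free commutative monoid is a total order with $x\prec y\Rightarrow xz\prec yz$ and $1\prec x$ for $x\neq1$. A finite $\Lambda\subset M\times M$ is a Gröbner system of a congruence $\sim$ if $x\sim y$ and $y\prec x$ for all $(x,y)\in\Lambda$, and every $z$ not divisible by any first component $x$ of a pair in $\Lambda$ is $\prec$-minimal in its $\sim$-class. Fix an admissible total order $\prec$ on $M$; enumerate $\mathcal{A}(S)=\{a_1,\dots,a_n\}$ with $x_{a_1}\prec\cdots\prec x_{a_n}$, $d_i=|a_i|$. Order $\tilde M$ by: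 $x^{\mu}\prec x^{\lambda}$ iff either $x^{\kappa(\mu)}\prec x^{\kappa(\lambda)}$ in $M$, or $\kappa(\mu)=\kappa(\lambda)$ and the sequence $(\mu(a_1[0]),\dots,\mu(a_1[d_1]),\mu(a_2[0]),\dots,\mu(a_n[d_n]))$ is lexicographically greater than $(\lambda(a_1[0]),\dots,\lambda(a_1[d_1]),\lambda(a_2[0]),\dots,\lambda(a_n[d_n]))$. *)

From HB Require Import structures.
From mathcomp Require Import all_boot all_order all_algebra.
Set Implicit Arguments. Unset Strict Implicit. Unset Printing Implicit Defensive.
Import Order.TTheory GRing.Theory Num.Theory.
Local Open Scope ring_scope.

Definition vec (r : nat) := 'rV[int]_r.

Definition submonoid r (S : vec r -> Prop) : Prop :=
  S 0 /\ (forall x y, S x -> S y -> S (x + y)).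

Definition fin_generated r (S : vec r -> Prop) : Prop :=
  exists g : seq (vec r), (forall y, y \in g -> S y) /\
    forall x, S x -> exists l : seq (vec r),
      (forall y, y \in l -> y \in g) /\ x = \sum_(y <- l) y.

Definition affine_monoid r (S : vec r -> Prop) : Prop :=
  submonoid S /\ fin_generated S.

Definition reduced r (S : vec r -> Prop) : Prop :=
  forall x, S x -> S (- x) -> x = 0.

(* grading: S = disjoint union of S_d with S_d S_e in S_{d+e} *)
Definition grading r (S : vec r -> Prop) (deg : vec r -> nat) : Prop :=
  forall x y, S x -> S y -> deg (x + y) = (deg x + deg y)%N.

Definition is_atom r (S : vec r -> Prop) (a : vec r) : Prop :=
  S a /\ a <> 0 /\
  forall x y, S x -> S y -> a = x + y -> x = 0 \/ y = 0.

Definition mono (I : finType) := {ffun I -> nat}.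

Definition mone (I : finType) : mono I := [ffun _ => 0%N].
Definition mmul (I : finType) (x y : mono I) : mono I := [ffun i => (x i + y i)%N].
Definition mvar (I : finType) (i : I) : mono I := [ffun j => nat_of_bool (j == i)].
Definition mdiv (I : finType) (x z : mono I) : Prop := forall i, (x i <= z i)%N.

Definition admissible (I : finType) (lt : mono I -> mono I -> Prop) : Prop :=
  [/\ (forall x, ~ lt x x),
      (forall x y z, lt x y -> lt y z -> lt x z),
      (forall x y, x <> y -> lt x y \/ lt y x),
      (forall x y z, lt x y -> lt (mmul x z) (mmul y z)) &
      (forall x, x <> mone I -> lt (mone I) x)].

Definition groebner_system (I : finType) (lt : mono I -> mono I -> Prop)
    (equiv : mono I -> mono I -> Prop) (Lam : mono I * mono I -> Prop) : Prop :=
  [/\ (exists s : seq (mono I * mono I), forall p, Lam p <-> p \in s),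
      (forall p, Lam p -> equiv p.1 p.2 /\ lt p.2 p.1) &
      (forall z, (forall p, Lam p -> ~ mdiv p.1 z) ->
         forall w, equiv z w -> ~ lt w z)].

Definition evalS r n (a : 'I_n -> vec r) (al : mono 'I_n) : vec r :=
  \sum_(k : 'I_n) a k *+ al k.

Definition simS r n (a : 'I_n -> vec r) (al ga : mono 'I_n) : Prop :=
  evalS a al = evalS a ga.

(* index set of the atoms a_k[i] of S~, 0 <= i <= d k = |a_k| *)
Definition tidx n (d : 'I_n -> nat) := {k : 'I_n & 'I_(d k).+1}.

(* the element s[i] of S~ is represented by the pair (s, i);
   s[i] t[j] = (st)[i+j] *)
Definition evalSt r n (a : 'I_n -> vec r) (d : 'I_n -> nat)
    (la : mono (tidx d)) : vec r * nat :=
  (\sum_(p : tidx d) a (tag p) *+ la p, (\sum_(p : tidx d) la p * tagged p)%N).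

Definition simSt r n (a : 'I_n -> vec r) (d : 'I_n -> nat)
    (la mu : mono (tidx d)) : Prop :=
  evalSt a la = evalSt a mu.

Definition kappa n (d : 'I_n -> nat) (la : mono (tidx d)) : mono 'I_n :=
  [ffun k => (\sum_(p : tidx d | tag p == k) la p)%N].

Definition delta n (d : 'I_n -> nat) (la : mono (tidx d)) : nat :=
  (\sum_(p : tidx d) tagged p * la p)%N.

(* position order in the sequence a_1[0],...,a_1[d_1],a_2[0],...,a_n[d_n] *)
Definition pos_lt n (d : 'I_n -> nat) (p q : tidx d) : bool :=
  (tag p < tag q)%N || ((tag p == tag q) && (val (tagged p) < val (tagged q))%N).

Definition lex_gt n (d : 'I_n -> nat) (mu la : mono (tidx d)) : Prop :=
  exists p, (la p < mu p)%N /\ forall q, pos_lt q p -> mu q = la q.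

Definition tlt n (d : 'I_n -> nat) (ltM : mono 'I_n -> mono 'I_n -> Prop)
    (mu la : mono (tidx d)) : Prop :=
  ltM (kappa mu) (kappa la) \/ (kappa mu = kappa la /\ lex_gt mu la).

Definition Gamma1 n (d : 'I_n -> nat) (Lam : mono 'I_n * mono 'I_n -> Prop)
    (pr : mono (tidx d) * mono (tidx d)) : Prop :=
  Lam (kappa pr.1, kappa pr.2) /\ delta pr.1 = delta pr.2.

Definition Gamma2 n (d : 'I_n -> nat) (ltM : mono 'I_n -> mono 'I_n -> Prop)
    (pr : mono (tidx d) * mono (tidx d)) : Prop :=
  exists p p' q q' : tidx d,
    tag p = tag p' /\ tag q = tag q' /\ ltM (mvar (tag p)) (mvar (tag q)) /\
        val (tagged p) = (val (tagged p')).+1 /\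
        val (tagged q') = (val (tagged q)).+1 /\
        pr = (mmul (mvar p) (mvar q), mmul (mvar p') (mvar q')).

Definition Gamma3 n (d : 'I_n -> nat)
    (pr : mono (tidx d) * mono (tidx d)) : Prop :=
  exists p p' q q' : tidx d,
    tag p = tag p' /\ tag q = tag p /\ tag q' = tag p /\
        val (tagged p) = (val (tagged p')).+1 /\
        val (tagged q') = (val (tagged q)).+1 /\
        (val (tagged p) <= val (tagged q))%N /\
        pr = (mmul (mvar p) (mvar q), mmul (mvar p') (mvar q')).

From mathcomp Require Import all_boot all_order all_algebra.
From mathcomp Require Import zify.
From Stdlib Require Import Classical.

(* Since x^la ~ x^mu in M~ iff kappa la ~_S kappa mu and
   delta la = delta mu, the pairs of Gamma1 are valid, and those of Gamma2 and
   Gamma3 are shifts x_{a[i]} x_{b[j]} -> x_{a[i-1]} x_{b[j+1]} that keep kappa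
   and delta and first differ at position a[i-1].
   Let z avoid all leading monomials and let w ~ z, w < z.  If
   kappa w < kappa z, some leading monomial c1 of a pair (c1, c2) of Lam
   divides kappa z; lift it to a divisor la of z and choose mu with
   kappa mu = c2 and delta mu = delta la, possible because
   delta la <= deg c1 = deg c2.  Then (la, mu) in Gamma1 divides z.
   Otherwise kappa w = kappa z and w exceeds z at a first position a[i], so z
   has some factor a[j] with j > i.  The codelta sum_b,j (|b| - j) la(b[j]) =
   deg (kappa la) - delta la is the same for w and z; but avoiding the leading
   monomials of Gamma2 and Gamma3 leaves z at most one factor b[j] with j < |b|
   after position a[i], so its codelta there is below |a| - i, the least excess
   of w over z at a[i]. *)

Set Implicit Arguments.
Unset Strict Implicit.
Unset Printing Implicit Defensive.

Definition finite_set (T : eqType) (U : T -> Prop) : Prop :=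
  exists s : seq T, forall x, U x <-> x \in s.

Lemma finite_subset (T : eqType) (U : T -> Prop) (s0 : seq T) :
  (forall x, U x -> x \in s0) -> finite_set U.
Proof.
elim: s0 U => [|y s0 IH] U sub; first by exists [::] => x; split => // /sub.
have [s hs] : finite_set (fun x => U x /\ x != y).
  apply: IH => x [/sub]; rewrite inE => /orP [/eqP -> | //].
  by rewrite eqxx.
case: (classic (U y)) => Uy; [exists (y :: s) | exists s] => x; rewrite ?inE.
  split => [Ux | /orP [/eqP -> // | /hs []//]].
  by case: (eqVneq x y) => //= xy; apply/hs.
split => [Ux | /hs [] //]; apply/hs; split => //.
by apply/eqP => exy; apply: Uy; rewrite -exy.
Qed.

Lemma finite_setU (T : eqType) (U V : T -> Prop) :
  finite_set U -> finite_set V -> finite_set (fun x => U x \/ V x).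
Proof.
move=> [s hs] [t ht]; exists (s ++ t) => x; rewrite mem_cat hs ht.
by split => [[] -> | /orP []]; rewrite ?orbT; auto.
Qed.

Lemma sum_le_single (T : finType) (P : pred T) (F : T -> nat) c :
  (forall t, P t -> 0 < F t -> F t <= c) ->
  (forall t u, P t -> P u -> 0 < F t -> 0 < F u -> t = u) ->
  \sum_(t | P t) F t <= c.
Proof.
move=> Fc Funiq.
case: (pickP (fun t => P t && (0 < F t))) => [t /andP [Pt Ft]|none].
  rewrite (bigD1 t) //= big1 ?addn0; first exact: Fc.
  move=> u /andP [Pu ut]; case: (posnP (F u)) => // Fu.
  by move: ut; rewrite (Funiq _ _ Pu Pt Fu Ft) eqxx.
by rewrite big1 // => u Pu; move: (none u); rewrite Pu /=; case: (F u).
Qed.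

Section Monomials.

Variable T : finType.
Implicit Types (x y z : mono T) (p q t : T).

Definition standard (Lam : mono T * mono T -> Prop) z : Prop :=
  forall pr, Lam pr -> ~ mdiv pr.1 z.

Lemma sum_mvar (P : pred T) p : \sum_(t | P t) mvar p t = P p.
Proof.
case Pp: (P p).
  rewrite (bigD1 p) //= big1 => [|t /andP [_ tp]]; first by rewrite ffunE eqxx.
  by rewrite ffunE (negbTE tp).
by rewrite big1 // => t Pt; rewrite ffunE; case: eqP Pt => // ->; rewrite Pp.
Qed.

Lemma sum_mul_mvar (F : T -> nat) p : \sum_t F t * mvar p t = F p.
Proof.
rewrite (bigD1 p) //= big1 => [|t tp]; first by rewrite ffunE eqxx muln1 addn0.
by rewrite ffunE (negbTE tp) muln0.
Qed.

Lemma mvar_factor x p : 0 < x p -> exists y, x = mmul y (mvar p).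
Proof.
move=> xp; exists [ffun t => x t - mvar p t]; apply/ffunP => t; rewrite !ffunE.
by case: (eqVneq t p) => [->|_]; rewrite ?subnK ?subn0 ?addn0.
Qed.

Lemma mmul_mvar_le2 p q t : mmul (mvar p) (mvar q) t <= 2.
Proof. by rewrite !ffunE; case: (t == p); case: (t == q). Qed.

Lemma mdiv_mmul_mvar p q z :
  0 < z p -> 0 < z q -> (p = q -> 1 < z p) ->
  mdiv (mmul (mvar p) (mvar q)) z.
Proof.
move=> zp zq zpq t; rewrite !ffunE.
case: (eqVneq t p) => [->|_].
  by case: (eqVneq p q) => [/zpq|_] //; rewrite addn0.
by case: (eqVneq t q) => [->|].
Qed.

Definition bounded_monos (B : nat) : seq (mono T) :=
  [seq [ffun t => nat_of_ord (f t)] | f : {ffun T -> 'I_B.+1}].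

Lemma mem_bounded_monos B x : (forall t, x t <= B) -> x \in bounded_monos B.
Proof.
move=> xB; apply/imageP; exists [ffun t => inord (x t)] => //.
by apply/ffunP => t; rewrite !ffunE inordK // ltnS.
Qed.

Lemma finite_bounded (U : mono T * mono T -> Prop) B :
  (forall pr, U pr -> forall t, pr.1 t <= B /\ pr.2 t <= B) -> finite_set U.
Proof.
move=> UB; apply: (@finite_subset _ _
  [seq (x, y) | x <- bounded_monos B, y <- bounded_monos B]).
move=> [x y] /UB xyB; apply/allpairsP; exists (x, y); split => //=;
  apply: mem_bounded_monos => t; [exact: (xyB t).1 | exact: (xyB t).2].
Qed.

Lemma sum_subfun_exists (P : pred T) (u : T -> nat) c :
  c <= \sum_(t | P t) u t ->
  exists v : T -> nat, (forall t, v t <= u t) /\ \sum_(t | P t) v t = c.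
Proof.
elim: c => [|c IH] le_c; first by exists (fun=> 0); split => //; rewrite big1.
have [v [le_vu sum_v]] := IH (ltnW le_c).
case: (pickP (fun t => P t && (v t < u t))) => [t /andP [Pt lt_t]|none].
  exists (fun s => v s + mvar t s); split.
    by move=> s; rewrite ffunE; case: eqP => [->|_]; rewrite ?addn1 ?addn0.
  by rewrite big_split /= sum_v sum_mvar Pt addn1.
exfalso; move: le_c; rewrite -sum_v ltnNge => /negP; apply.
apply: leq_sum => t Pt; move: (none t); rewrite Pt /= => /negbT.
by rewrite -leqNgt.
Qed.

End Monomials.

Lemma admissible_mvar_ltn n (ltM : mono 'I_n -> mono 'I_n -> Prop) (k l : 'I_n) :
  admissible ltM -> (forall k l : 'I_n, k < l -> ltM (mvar k) (mvar l)) ->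
  ltM (mvar k) (mvar l) -> k < l.
Proof.
case=> irr trans _ _ _ ltM_mvar lt_kl.
case: (ltngtP k l) => // [lt_lk | /val_inj eq_kl].
  by case: (irr _ (trans _ _ _ lt_kl (ltM_mvar _ _ lt_lk))).
by rewrite eq_kl in lt_kl; case: (irr _ lt_kl).
Qed.

Section Lifting.

Variables (n : nat) (d : 'I_n -> nat).
Implicit Types (c : mono 'I_n) (la mu z w : mono (tidx d)) (p q t u : tidx d).
Implicit Types (pr : mono (tidx d) * mono (tidx d)).

(* With [d k = |a_k|], [weight c] is the degree of the element x^c of S. *)
Definition weight c : nat := \sum_k d k * c k.

Lemma kappaE la k : kappa la k = \sum_(p | tag p == k) la p.
Proof. by rewrite ffunE. Qed.

Lemma sum_tag_kappa (F : 'I_n -> nat) la :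
  \sum_(p : tidx d) F (tag p) * la p = \sum_k F k * kappa la k.
Proof.
rewrite (partition_big (fun p : tidx d => tag p) xpredT) //=.
by apply: eq_bigr => k _; rewrite kappaE big_distrr; apply: eq_bigr => p /eqP <-.
Qed.

Lemma kappa_mmul la mu : kappa (mmul la mu) = mmul (kappa la) (kappa mu).
Proof.
apply/ffunP => k; rewrite !ffunE -big_split.
by apply: eq_bigr => p _; rewrite ffunE.
Qed.

Lemma kappa_mvar p : kappa (mvar p) = mvar (tag p).
Proof. by apply/ffunP => k; rewrite kappaE sum_mvar ffunE eq_sym. Qed.

Lemma delta_mmul la mu : delta (mmul la mu) = delta la + delta mu.
Proof.
by rewrite /delta -big_split; apply: eq_bigr => p _; rewrite ffunE mulnDr.
Qed.

Lemma delta_mvar p : delta (mvar p) = tagged p.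
Proof. exact: (sum_mul_mvar (fun q : tidx d => nat_of_ord (tagged q))). Qed.

Lemma le_kappa la p : la p <= kappa la (tag p).
Proof. by rewrite kappaE (bigD1 p) //= leq_addr. Qed.

Lemma tagged_le p : tagged p <= d (tag p).
Proof. by rewrite -ltnS ltn_ord. Qed.

Definition codelta la : nat := \sum_(p : tidx d) (d (tag p) - tagged p) * la p.

Lemma codelta_add_delta la : codelta la + delta la = weight (kappa la).
Proof.
rewrite /codelta /weight -sum_tag_kappa /delta -big_split.
apply: eq_bigr => p _ /=.
by rewrite -mulnDl subnK // tagged_le.
Qed.

Lemma delta_le_weight la : delta la <= weight (kappa la).
Proof. by rewrite -codelta_add_delta leq_addl. Qed.

Lemma evalSt_kappa_delta r (a : 'I_n -> vec r) la :
  evalSt a la = (evalS a (kappa la), delta la).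
Proof.
congr (_, _); last by apply: eq_bigr => p _; rewrite mulnC.
rewrite /evalS (partition_big (fun p : tidx d => tag p) xpredT) //=.
apply: eq_bigr => k _; rewrite kappaE -GRing.sumrMnr.
by apply: eq_bigr => p /eqP <-.
Qed.

Lemma simStE r (a : 'I_n -> vec r) la mu :
  simSt a la mu <-> simS a (kappa la) (kappa mu) /\ delta la = delta mu.
Proof.
rewrite /simSt /simS !evalSt_kappa_delta.
by split => [[-> ->] | [-> ->]].
Qed.

Definition tbase (k : 'I_n) : tidx d :=
  Tagged (fun k => 'I_(d k).+1) (ord0 : 'I_(d k).+1).
(* a[i+1] and a[i-1] for p = a[i]; [inord] makes them total, with junk values
   at i = |a| and i = 0. *)
Definition tsucc p : tidx d :=
  Tagged (fun k => 'I_(d k).+1) (inord (tagged p).+1 : 'I_(d (tag p)).+1).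
Definition tpred p : tidx d :=
  Tagged (fun k => 'I_(d k).+1) (inord (tagged p).-1 : 'I_(d (tag p)).+1).

Lemma tsuccE p : tagged p < d (tag p) -> tagged (tsucc p) = (tagged p).+1 :> nat.
Proof. by move=> lt_p; rewrite /= inordK. Qed.

Lemma tpredE p : tagged (tpred p) = (tagged p).-1 :> nat.
Proof. by rewrite /= inordK // (leq_ltn_trans (leq_pred _) (ltn_ord _)). Qed.

Lemma kappa_delta0 c : exists mu, kappa mu = c /\ delta mu = 0.
Proof.
exists [ffun p => c (tag p) * mvar (tbase (tag p)) p]; split.
  apply/ffunP => k; rewrite kappaE (eq_bigr (fun p => c k * mvar (tbase k) p)).
    by rewrite -big_distrr sum_mvar /= eqxx muln1.
  by move=> p /eqP <-; rewrite ffunE.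
rewrite /delta big1 // => p _; rewrite !ffunE.
by case: eqP => [-> | _]; rewrite ?muln0.
Qed.

Lemma delta_succ mu : delta mu < weight (kappa mu) ->
  exists mu', kappa mu' = kappa mu /\ delta mu' = (delta mu).+1.
Proof.
rewrite -codelta_add_delta -{1}[delta mu]add0n ltn_add2r lt0n.
rewrite /codelta sum_nat_eq0.
move=> /forallPn [p] /=; rewrite muln_eq0 negb_or subn_eq0 -ltnNge -lt0n.
case/andP => lt_p mu_p; have [nu ->] := mvar_factor mu_p.
exists (mmul nu (mvar (tsucc p))).
by rewrite !kappa_mmul !kappa_mvar !delta_mmul !delta_mvar tsuccE // addnS.
Qed.

Lemma kappa_delta_onto c e : e <= weight c ->
  exists mu, kappa mu = c /\ delta mu = e.
Proof.
elim: e => [|e IH] le_e; first exact: kappa_delta0.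
have [mu [kmu dmu]] := IH (ltnW le_e).
by rewrite -kmu -dmu in le_e *; exact: delta_succ.
Qed.

Lemma lift_mdiv_kappa c z :
  mdiv c (kappa z) -> exists la, mdiv la z /\ kappa la = c.
Proof.
move=> c_z.
have /fin_all_exists [v vP] : forall k, exists v : tidx d -> nat,
    (forall p, v p <= z p) /\ \sum_(p | tag p == k) v p = c k.
  by move=> k; apply: sum_subfun_exists; rewrite -kappaE; exact: c_z.
exists [ffun p => v (tag p) p]; split => [p | ].
  by rewrite ffunE; exact: (vP _).1.
apply/ffunP => k; rewrite kappaE -(vP k).2.
by apply: eq_bigr => p /eqP <-; rewrite ffunE.
Qed.

Lemma tidx_eqE p q :
  (p == q) = (tag p == tag q) && (tagged p == tagged q :> nat).
Proof.
case: p q => [k i] [l j] /=; rewrite -tag_eqE /tag_eq /=.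
by case: eqP => //= e; subst l; rewrite tagged_asE.
Qed.

Lemma pos_ltE p q :
  pos_lt p q = (tag p < tag q) || (tag p == tag q) && (tagged p < tagged q).
Proof. by []. Qed.

Lemma pos_lt_irr p : ~~ pos_lt p p.
Proof. by rewrite /pos_lt ltnn eqxx ltnn. Qed.

Lemma pos_ltNge p q : pos_lt p q = (q != p) && ~~ pos_lt q p.
Proof. rewrite /pos_lt tidx_eqE -!val_eqE /=; lia. Qed.

Lemma pos_lt_trans p q t : pos_lt p q -> pos_lt q t -> pos_lt p t.
Proof. rewrite /pos_lt -!val_eqE /=; lia. Qed.

Lemma pos_lt_tag_eq p q : tag p = tag q -> pos_lt p q = (tagged p < tagged q).
Proof.
by move=> /(congr1 (@nat_of_ord n)) e; rewrite /pos_lt -val_eqE /= e ltnn eqxx.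
Qed.

Lemma pos_lt_asym p q : pos_lt p q -> ~~ pos_lt q p.
Proof. by rewrite pos_ltNge => /andP []. Qed.

Lemma sum_pos_split (F : tidx d -> nat) p :
  \sum_(t : tidx d) F t =
  \sum_(t | pos_lt t p) F t + F p + \sum_(t | pos_lt p t) F t.
Proof.
rewrite (bigID (fun t => pos_lt t p)) /= -addnA; congr (_ + _).
rewrite (bigD1 p) ?pos_lt_irr //=; congr (_ + _).
by apply: eq_bigl => t; rewrite (pos_ltNge p t) andbC.
Qed.

Lemma lex_gt_later w z p :
  kappa w = kappa z -> z p < w p -> (forall q, pos_lt q p -> w q = z q) ->
  exists2 q : tidx d, tag q = tag p & tagged p < tagged q /\ 0 < z q.
Proof.
move=> ek lt_p pre.
case: (pickP (fun q : tidx d =>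
  [&& tag q == tag p, tagged p < tagged q & 0 < z q])).
  by move=> q /and3P [/eqP tq lt_q zq]; exists q.
move=> none; suff : kappa z (tag p) < kappa w (tag p) by rewrite ek ltnn.
rewrite !kappaE (bigD1 p) //= [X in _ < X](bigD1 p) //= -addSn.
apply: leq_add => //; apply: leq_sum => q /andP [/eqP tq qp].
case: (ltngtP (tagged q) (tagged p)) => [lt_qp | lt_pq | eq_qp].
- by rewrite pre // pos_lt_tag_eq.
- move: (none q); rewrite lt_pq tq eqxx /= => /negbT.
  by rewrite -leqNgt leqn0 => /eqP ->.
- by move: qp; rewrite tidx_eqE eq_qp eqxx andbT tq eqxx.
Qed.

Definition shift_pair (pr : mono (tidx d) * mono (tidx d)) : Prop :=
  exists p p' q q', [/\ tag p = tag p' /\ tag q = tag q',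
    tagged p = (tagged p').+1 :> nat /\ tagged q' = (tagged q).+1 :> nat,
    pos_lt p' q & pr = (mmul (mvar p) (mvar q), mmul (mvar p') (mvar q'))].

Lemma shift_pair_finite : finite_set shift_pair.
Proof.
apply: (@finite_bounded _ _ 2) => _ [p [p' [q [q' [_ _ _ ->]]]]] t.
by split; apply: mmul_mvar_le2.
Qed.

Lemma shift_pair_kappa_delta pr : shift_pair pr ->
  kappa pr.1 = kappa pr.2 /\ delta pr.1 = delta pr.2.
Proof.
case=> p [p' [q [q' [[tp tq] [ip iq] _ ->]]]] /=.
split; first by rewrite !kappa_mmul !kappa_mvar tp tq.
by rewrite !delta_mmul !delta_mvar ip iq addnS.
Qed.

Lemma shift_pair_lex_gt pr : shift_pair pr -> lex_gt pr.2 pr.1.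
Proof.
case=> p [p' [q [q' [[tp tq] [ip iq] lt_pq ->]]]] /=.
have lt_qq' : pos_lt q q' by rewrite pos_lt_tag_eq // iq.
have not_before x : ~~ pos_lt x p' -> forall u, pos_lt u p' -> (u == x) = false.
  by move=> nx u lt_u; apply/negbTE; apply: contraTneq lt_u => ->.
have np : ~~ pos_lt p p' by rewrite pos_lt_tag_eq // ip ltnNge leqnSn.
have nq := pos_lt_asym lt_pq.
have nq' := pos_lt_asym (pos_lt_trans lt_pq lt_qq').
have pp' : p' != p by apply/eqP => e; move: ip; rewrite e; lia.
have qp' : p' != q by apply: contraTneq lt_pq => ->; exact: pos_lt_irr.
exists p'; split; first by rewrite !ffunE eqxx (negbTE pp') (negbTE qp').
move=> u lt_u; rewrite !ffunE.
by rewrite !(not_before _ _ _ lt_u) ?pos_lt_irr.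
Qed.

Lemma shift_pair_sim_tlt r (a : 'I_n -> vec r) ltM pr : shift_pair pr ->
  simSt a pr.1 pr.2 /\ tlt ltM pr.2 pr.1.
Proof.
move=> sh; have [ek ed] := shift_pair_kappa_delta sh.
split; first by apply/simStE; rewrite /simS ek.
by right; split; [rewrite ek | exact: shift_pair_lex_gt].
Qed.

Lemma Gamma2_shift_pair ltM pr :
  admissible ltM -> (forall k l : 'I_n, k < l -> ltM (mvar k) (mvar l)) ->
  Gamma2 ltM pr -> shift_pair pr.
Proof.
move=> adm ltM_mvar [p [p' [q [q' [tp [tq [lt_pq [ip [iq ->]]]]]]]]].
exists p, p', q, q'; split => //.
by apply/orP; left; rewrite -tp; exact: admissible_mvar_ltn lt_pq.
Qed.

Lemma Gamma3_shift_pair pr : Gamma3 pr -> shift_pair pr.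
Proof.
move=> [p [p' [q [q' [tp [tq [tq' [ip [iq [le_pq ->]]]]]]]]]].
exists p, p', q, q'; split; rewrite ?tq' //.
rewrite pos_lt_tag_eq; last by rewrite -tp tq.
move: ip le_pq; rewrite /=; lia.
Qed.

Section StandardMonomials.

Variable ltM : mono 'I_n -> mono 'I_n -> Prop.
Hypothesis ltM_mvar : forall k l : 'I_n, k < l -> ltM (mvar k) (mvar l).
Variable z : mono (tidx d).
Hypotheses (z_std2 : standard (@Gamma2 n d ltM) z)
           (z_std3 : standard (@Gamma3 n d) z).

Lemma standard_no_cross p q :
  tag p < tag q -> 0 < tagged p -> tagged q < d (tag q) ->
  0 < z p -> 0 < z q -> False.
Proof.
move=> lt_pq p_gt0 q_lt zp zq.
apply: (z_std2
  (pr := (mmul (mvar p) (mvar q), mmul (mvar (tpred p)) (mvar (tsucc q))))).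
  have ip : tagged p = (tagged (tpred p)).+1 :> nat by rewrite tpredE prednK.
  have iq : tagged (tsucc q) = (tagged q).+1 :> nat by rewrite tsuccE.
  exists p, (tpred p), q, (tsucc q); do 2 (split; first by []).
  by split; first exact: ltM_mvar.
by apply: mdiv_mmul_mvar => // epq; rewrite epq ltnn in lt_pq.
Qed.

Lemma standard_no_nest p q :
  tag q = tag p -> 0 < tagged p -> tagged p <= tagged q ->
  tagged q < d (tag q) -> 0 < z p -> 0 < z q -> (p = q -> 1 < z p) -> False.
Proof.
move=> tq p_gt0 le_pq q_lt zp zq zpq.
apply: (z_std3
  (pr := (mmul (mvar p) (mvar q), mmul (mvar (tpred p)) (mvar (tsucc q))))).
  have ip : tagged p = (tagged (tpred p)).+1 :> nat by rewrite tpredE prednK.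
  have iq : tagged (tsucc q) = (tagged q).+1 :> nat by rewrite tsuccE.
  by exists p, (tpred p), q, (tsucc q).
exact: mdiv_mmul_mvar.
Qed.

Lemma standard_tail_support p q t :
  tag q = tag p -> tagged p < tagged q -> 0 < z q ->
  pos_lt p t -> 0 < (d (tag t) - tagged t) * z t ->
  [/\ tag t = tag p, tagged p < tagged t, tagged t < d (tag t) & z t = 1].
Proof.
move=> tq lt_pq zq lt_pt; rewrite muln_gt0 subn_gt0 => /andP [t_lt zt].
move: lt_pt; rewrite pos_ltE => /orP [lt_tag | /andP [/eqP tpt lt_i]].
  by case: (@standard_no_cross q t); rewrite ?tq //; lia.
split => //; apply/eqP; rewrite eqn_leq zt andbT leqNgt; apply/negP => zt2.
by apply: (@standard_no_nest t t) (fun _ => zt2) => //; lia.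
Qed.

Lemma standard_tail_lt p q :
  tag q = tag p -> tagged p < tagged q -> 0 < z q ->
  \sum_(t | pos_lt p t) (d (tag t) - tagged t) * z t < d (tag p) - tagged p.
Proof.
move=> tq lt_pq zq; have q_le : tagged q <= d (tag p) by rewrite -tq tagged_le.
suff : \sum_(t | pos_lt p t) (d (tag t) - tagged t) * z t
         <= d (tag p) - tagged p - 1 by lia.
have support := standard_tail_support tq lt_pq zq.
apply: sum_le_single => [t lt_pt pos | t u lt_pt lt_pu pos_t pos_u].
  have [tt lt_t _ ->] := support t lt_pt pos.
  rewrite muln1; apply: leq_trans (leq_sub2l _ lt_t) _.
  by rewrite tt subnS -subn1.
have [tt lt_t t_lt zt] := support t lt_pt pos_t.
have [tu lt_u u_lt zu] := support u lt_pu pos_u.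
have nest (x y : tidx d) : tag x = tag y -> tagged p < tagged x ->
    tagged x <= tagged y -> tagged y < d (tag y) -> z x = 1 -> z y = 1 -> x = y.
  move=> txy lt_x le_xy y_lt zx zy; case: (eqVneq x y) => // xy; exfalso.
  apply: (standard_no_nest (esym txy) (leq_ltn_trans (leq0n _) lt_x) le_xy y_lt).
  - by rewrite zx.
  - by rewrite zy.
  - by move=> exy; rewrite exy eqxx in xy.
case: (leqP (tagged t) (tagged u)) => [le_tu | /ltnW le_ut].
  by apply: nest; rewrite ?tt ?tu.
by apply/esym/nest; rewrite ?tt ?tu.
Qed.

Lemma standard_lex_min w :
  kappa w = kappa z -> delta w = delta z -> ~ lex_gt w z.
Proof.
move=> ek ed [p [lt_p pre]].
have [q tq [lt_pq zq]] := lex_gt_later ek lt_p pre.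
have tail := standard_tail_lt tq lt_pq zq.
have : codelta w = codelta z.
  by apply/(@addIn (delta z)); rewrite -{1}ed !codelta_add_delta ek.
rewrite /codelta !(sum_pos_split _ p).
rewrite (eq_bigr (fun t => (d (tag t) - tagged t) * z t)) => [|t /pre -> //].
have := leq_mul (leqnn (d (tag p) - tagged p)) lt_p; rewrite mulnS.
(* [set] merges convertible copies of the sums into single atoms for [lia]. *)
move: tail; set Pz := \sum_(t | pos_lt t p) _.
set Tz := \sum_(t | pos_lt p t) (d (tag t) - tagged t) * z t.
move: (d (tag p) - tagged p) => A; move: (A * w p) (A * z p) => X Y; lia.
Qed.

End StandardMonomials.

Section Gamma1.

Variable Lam : mono 'I_n * mono 'I_n -> Prop.

Lemma Gamma1_finite : finite_set Lam -> finite_set (@Gamma1 n d Lam).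
Proof.
move=> [s sP].
pose B := \max_(c <- s) (\sum_k c.1 k + \sum_k c.2 k).
apply: (@finite_bounded _ _ B) => -[la mu] [/sP Lam_s _] t /=.
have le_B := leq_bigmax_seq (P := xpredT)
  (F := fun c : mono 'I_n * mono 'I_n => \sum_k c.1 k + \sum_k c.2 k) _ Lam_s isT.
have le_sum (c : mono 'I_n) k : c k <= \sum_l c l.
  by rewrite (bigD1 k) //= leq_addr.
split; apply: leq_trans (le_kappa _ t) (leq_trans (le_sum _ _) _);
  apply: leq_trans _ le_B; [exact: leq_addr | exact: leq_addl].
Qed.

Lemma Gamma1_sim_tlt r (a : 'I_n -> vec r) ltM pr :
  (forall x, Lam x -> simS a x.1 x.2 /\ ltM x.2 x.1) ->
  Gamma1 Lam pr -> simSt a pr.1 pr.2 /\ tlt ltM pr.2 pr.1.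
Proof.
by move=> Lam_ok [/Lam_ok [sim lt] ed]; split; [apply/simStE | left].
Qed.

Lemma standard_Gamma1_kappa z :
  (forall x, Lam x -> weight x.1 = weight x.2) ->
  standard (@Gamma1 n d Lam) z -> standard Lam (kappa z).
Proof.
move=> Lam_weight z_std [c1 c2] Lam_c /lift_mdiv_kappa [la [la_z /= kla]].
have [mu [kmu dmu]] : exists mu, kappa mu = c2 /\ delta mu = delta la.
  apply: kappa_delta_onto; rewrite -(Lam_weight _ Lam_c) /= -kla.
  exact: delta_le_weight.
by apply: (z_std (la, mu)) la_z; split; rewrite /= ?kla ?kmu.
Qed.

End Gamma1.

End Lifting.

Lemma evalS_deg r (S : vec r -> Prop) (deg : vec r -> nat) n (a : 'I_n -> vec r) :
  submonoid S -> grading S deg -> (forall k, S (a k)) ->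
  forall c, S (evalS a c) /\ deg (evalS a c) = weight (fun k => deg (a k)) c.
Proof.
move=> [S0 SD] deg_add Sa c.
have deg0 : deg 0%R = 0 by have := deg_add _ _ S0 S0; rewrite GRing.addr0; lia.
have degMn x m : S x -> S (x *+ m)%R /\ deg (x *+ m)%R = deg x * m.
  move=> Sx; elim: m => [|m [Sm dm]]; first by rewrite GRing.mulr0n muln0.
  by rewrite GRing.mulrS; split; [exact: SD | rewrite deg_add // dm mulnS].
rewrite /evalS /weight; elim/big_rec2: _ => // k y1 y2 _ [Sy dy].
have [Sm dm] := degMn _ (c k) (Sa k).
by split; [exact: SD | rewrite deg_add // dm dy].
Qed.

Lemma simS_weight r (S : vec r -> Prop) (deg : vec r -> nat) n
    (a : 'I_n -> vec r) c1 c2 :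
  submonoid S -> grading S deg -> (forall k, S (a k)) ->
  simS a c1 c2 ->
  weight (fun k => deg (a k)) c1 = weight (fun k => deg (a k)) c2.
Proof.
move=> monS gradS Sa e.
by rewrite -(evalS_deg monS gradS Sa c1).2 e (evalS_deg monS gradS Sa c2).2.
Qed.

Theorem theorem5p3 (r : nat) (S : vec r -> Prop) (deg : vec r -> nat)
  (n : nat) (a : 'I_n -> vec r)
  (ltM : mono 'I_n -> mono 'I_n -> Prop)
  (Lam : mono 'I_n * mono 'I_n -> Prop) :
  affine_monoid S -> reduced S -> grading S deg ->
  injective a ->
  (forall k, is_atom S (a k)) ->
  (forall b, is_atom S b -> exists k, a k = b) ->
  admissible ltM ->
  (forall k l : 'I_n, (k < l)%N -> ltM (mvar k) (mvar l)) ->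
  groebner_system ltM (simS a) Lam ->
  groebner_system (@tlt n (fun k => deg (a k)) ltM)
    (@simSt r n a (fun k => deg (a k)))
    (fun pr => @Gamma1 n (fun k => deg (a k)) Lam pr \/
               @Gamma2 n (fun k => deg (a k)) ltM pr \/
               @Gamma3 n (fun k => deg (a k)) pr).
Proof.
move=> [monS _] _ gradS _ atoms _ admM ltM_mvar [finLam LamV LamStd].
have Sa k : S (a k) := (atoms k).1.
have Lam_weight x :
    Lam x -> weight (fun k => deg (a k)) x.1 = weight (fun k => deg (a k)) x.2.
  by case/LamV => sim _; exact: simS_weight monS gradS Sa sim.
have [s sP] := shift_pair_finite (fun k => deg (a k)).
split.
- apply: finite_setU; first exact: Gamma1_finite.
  by apply: finite_setU; apply: (finite_subset (s0 := s)) => pr;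
    [move/(Gamma2_shift_pair admM ltM_mvar) | move/Gamma3_shift_pair]; move/sP.
- move=> pr [/(Gamma1_sim_tlt LamV) // | [G2 | G3]]; apply: shift_pair_sim_tlt.
    exact: Gamma2_shift_pair G2.
  exact: Gamma3_shift_pair.
- move=> z z_std w /simStE [ek ed] [lt_k | [ek' lex]].
    apply: (LamStd (kappa z)) ek lt_k; apply: standard_Gamma1_kappa Lam_weight _.
    by move=> pr G1; apply: z_std; left.
  apply: (standard_lex_min ltM_mvar _ _ ek' (esym ed) lex) => pr G.
    by apply: z_std; right; left.
  by apply: z_std; right; right.
Qed.
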